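(* Let ${\cal G}$ be a graph as described in the context and let $f$ be an edgewise linear function on ${\cal G}$. Then for every $p\ge 1$, $$\|f\|_{p,{\cal E}}\le \rho_{\sup}^{1/p}\,\|f\|_{p,{\cal V}}.$$
   Context: A graph ${\cal G}$ consists of an undirected graph $(V,E)$ (possibly infinite; multiple edges and self-loops allowed), a length $\ell_e>0$ for each edge $e$, a specified subset $\partial{\cal G}\subseteq V$ of boundary vertices, a vertex measure ${\cal V}$ (a measure supported on $V$ with ${\cal V}(v)>0$ for every $v$), and an edge measure ${\cal E}$ (zero on vertices, and on the interior of each edge $e$ equal to $a_e>0$ times Lebesgue measure). ${\cal G}$ is identified with its geometric realization (a closed interval of length $\ell_e$ attached between the endpoints of each edge $e$). A function is edgewise linear if it is continuous on ${\cal G}$ and linear on each edge interval. $\|f\|_{p,\mu}=(\int_{\cal G}|f|^p\,d\mu)^{1/p}$. The half-degree of $v$ is $\rho(v)={\cal V}(v)^{-1}\sum_{e\ni v}{\cal E}(e)/2$, and $\rho_{\sup}=\sup_{v\in V}\rho(v)$. *)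

From HB Require Import structures.
From mathcomp Require Import all_boot all_order all_algebra.
From mathcomp Require Import all_classical all_reals all_analysis.
Set Implicit Arguments. Unset Strict Implicit. Unset Printing Implicit Defensive.
Import Order.TTheory GRing.Theory Num.Theory.
Local Open Scope classical_set_scope.
Local Open Scope ring_scope.

(* A (metric, measured) graph: possibly infinite vertex and edge sets,
   multiple edges and self-loops allowed (an edge is just an element of
   [edge] with two endpoints [esrc], [etgt], possibly equal). *)
Record mgraph (R : realType) := MGraph {
  vert : choiceType;
  edge : choiceType;
  esrc : edge -> vert;
  etgt : edge -> vert;
  elen : edge -> R;
  elen_gt0 : forall e, 0 < elen e;
  bdry : set vert;
  vmeas : vert -> R;
  vmeas_gt0 : forall v, 0 < vmeas v;
  edens : edge -> R;
  edens_gt0 : forall e, 0 < edens e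
}.

Section defs.
Variable R : realType.
Variable G : mgraph R.

Definition emeas (e : edge G) : R := edens e * elen e.

(* edge-ends: (e,false) is the source end, (e,true) the target end;
   a self-loop at v contributes two ends at v *)
Definition eend (x : edge G * bool) : vert G :=
  if x.2 then etgt x.1 else esrc x.1.

Definition half_degree (v : vert G) : \bar R :=
  ((vmeas v)^-1)%:E *
  (\esum_(x in [set x | eend x = v]) ((emeas x.1 / 2)%:E))%E.

Definition rho_sup : \bar R := ereal_sup (range half_degree).

(* A function on the geometric realization: its values at the vertices
   [fv], and on each edge e its values [fe e t] at the point at distance
   t from the source end, t in [0, l_e]. *)
Record edgewise_linear := EdgewiseLinear {
  fv : vert G -> R;
  fe : edge G -> R -> R;
  fe_linear : forall e, exists a b : R,
      forall t, t \in `[0, elen e] -> fe e t = a + b * t;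
  (* continuity on the realization: edge values agree with vertex values
     at the endpoints *)
  fe_src : forall e, fe e 0 = fv (esrc e);
  fe_tgt : forall e, fe e (elen e) = fv (etgt e)
}.

Definition norm_E (p : R) (f : edgewise_linear) : \bar R :=
  poweR (\esum_(e in [set: edge G])
     ((edens e)%:E *
      \int[lebesgue_measure]_(t in `[0%R, elen e]%classic) ((`|fe f e t| `^ p)%:E))%E)
    p^-1.

Definition norm_V (p : R) (f : edgewise_linear) : \bar R :=
  poweR (\esum_(v in [set: vert G]) ((vmeas v * `|fv f v| `^ p)%:E)) p^-1.

End defs.

(* On an edge of length l, |f|^p is a convex function of the affine
   function f, hence lies below the chord joining its endpoint values; the
   trapezoid rule then gives a_e * int_e |f|^p <= E(e)/2 * (|f(u)|^p + |f(w)|^p)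
   for the endpoints u, w of e.  Summing over all edges and regrouping the
   edge-ends by the vertex they sit at produces, at each vertex v, the factor
   sum_{e ∋ v} E(e)/2 = rho(v) V(v) <= rho_sup V(v) in front of |f(v)|^p.
   Taking p-th roots concludes. *)
From HB Require Import structures.
From mathcomp Require Import all_boot all_order all_algebra.
From mathcomp Require Import all_classical all_reals all_analysis.
From mathcomp Require Import ring lra measurable_realfun.
Import Order.TTheory GRing.Theory Num.Theory.
Local Open Scope ring_scope.
Local Open Scope classical_set_scope.

Section affine_powR.
Context {R : realType}.

Lemma integral_linear_interpolation (l A B : R) : 0 < l ->
  (\int[lebesgue_measure]_(t in `[0%R, l]) ((1 - t / l) * A + t / l * B)%:E
   = (l * (A + B) / 2)%:E)%E.
Proof.
move=> l_gt0.
pose F t := A * t + (B - A) / (2 * l) * (t * t).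
have dF x : is_derive x (1 : R) F ((1 - x / l) * A + x / l * B).
  apply: is_derive_eq.
  change (A * 1 + (B - A) / (2 * l) * (x * 1 + x * 1)
    = (1 - x / l) * A + x / l * B).
  by field; rewrite gt_eqF.
rewrite (@continuous_FTC2 _ _ F) //.
- by rewrite /F; congr (_%:E); field; rewrite gt_eqF.
- by apply: derivable_within_continuous => x _; case: (dF x).
- split.
  + by move=> x _; case: (dF x).
  + apply/cvg_at_right_filter/differentiable_continuous.
    by rewrite -derivable1_diffP; case: (dF 0).
  + apply/cvg_at_left_filter/differentiable_continuous.
    by rewrite -derivable1_diffP; case: (dF l).
- by move=> x _; rewrite derive1E; case: (dF x).
Qed.

Context {p : R} (p_ge1 : 1 <= p).

Lemma powR_norm_affine_le_chord (l a b t : R) : 0 < l -> 0 <= t <= l ->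
  `|a + b * t| `^ p <= (1 - t / l) * `|a| `^ p + t / l * `|a + b * l| `^ p.
Proof.
move=> l_gt0 /andP[t_ge0 t_le].
have tl_ge0 : 0 <= t / l by rewrite divr_ge0 // ltW.
have tl_le1 : t / l <= 1 by rewrite ler_pdivrMr // mul1r.
have lam_ge0 : 0 <= 1 - t / l by rewrite subr_ge0.
have lam_le1 : 1 - t / l <= 1 by rewrite lerBlDr lerDl.
have chord : a + b * t = (1 - t / l) * a + t / l * (a + b * l).
  by field; rewrite gt_eqF.
have convex : ((1 - t / l) * `|a| + (1 - (1 - t / l)) * `|a + b * l|) `^ p
    <= (1 - t / l) * `|a| `^ p + (1 - (1 - t / l)) * `|a + b * l| `^ p.
  apply: (convex_powR p_ge1 (Itv01 lam_ge0 lam_le1)) => /=;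
    by rewrite inE /= in_itv /= andbT.
rewrite (_ : 1 - (1 - t / l) = t / l) in convex; last by ring.
apply: le_trans convex.
apply: ge0_ler_powR; [exact: le_trans ler01 p_ge1 | by rewrite nnegrE | |].
- by rewrite nnegrE addr_ge0 // mulr_ge0.
rewrite chord; apply: le_trans (ler_normD _ _) _.
by rewrite (normrM (1 - t / l)) (normrM (t / l)) (ger0_norm lam_ge0)
  (ger0_norm tl_ge0).
Qed.

Lemma integral_powR_norm_affine_le (l a b : R) : 0 < l ->
  (\int[lebesgue_measure]_(t in `[0%R, l]) (`|a + b * t| `^ p)%:E
   <= (l * (`|a| `^ p + `|a + b * l| `^ p) / 2)%:E)%E.
Proof.
move=> l_gt0; rewrite -integral_linear_interpolation //.
apply: ge0_le_integral => //.
- apply: measurableT_comp => //.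
  apply: (measurableT_comp (measurable_powR p)).
  apply: (measurableT_comp (@normr_measurable R setT)).
  exact: measurable_funD.
- apply: measurableT_comp => //.
  apply: measurable_funD; apply: measurable_funM => //; last exact: measurable_funM.
  apply: measurable_funD => //; apply: measurableT_comp => //.
  exact: measurable_funM.
- move=> t; rewrite /= in_itv /= => t_in.
  by rewrite lee_fin powR_norm_affine_le_chord.
Qed.

End affine_powR.

Lemma esumZl_le [R : realType] [T : choiceType] (I : set T) (k : \bar R)
    (a : T -> \bar R) : (0 <= k)%E -> (forall i, 0 <= a i)%E ->
  (\esum_(i in I) (k * a i) <= k * \esum_(i in I) a i)%E.
Proof.
move=> k_ge0 a_ge0; apply: ge_ereal_sup => _ [X XI <-].
rewrite -ge0_mule_fsumr //; apply: lee_wpmul2l => //.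
by apply: ereal_sup_ubound; exists X.
Qed.

Section graph.
Context {R : realType} {G : mgraph R}.

Lemma emeas_gt0 (e : edge G) : 0 < emeas e.
Proof. by rewrite mulr_gt0 ?edens_gt0 ?elen_gt0. Qed.

Lemma half_degree_ge0 (v : vert G) : (0 <= half_degree v)%E.
Proof.
apply: mule_ge0; first by rewrite lee_fin invr_ge0 ltW ?vmeas_gt0.
by apply: esum_ge0 => x _; rewrite lee_fin divr_ge0 // ltW ?emeas_gt0.
Qed.

Lemma vmeas_mul_half_degree (v : vert G) :
  ((vmeas v)%:E * half_degree v
   = \esum_(x in [set x | eend x = v]) (emeas x.1 / 2)%:E)%E.
Proof. by rewrite muleA -EFinM mulfV ?gt_eqF ?vmeas_gt0 // mul1e. Qed.

Lemma half_degree_le_rho_sup (v : vert G) : (half_degree v <= rho_sup G)%E.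
Proof. by apply: ereal_sup_ubound; exists v. Qed.

Lemma esum_edge_ends (g : edge G * bool -> \bar R) : (forall x, 0 <= g x)%E ->
  \esum_(e in [set: edge G]) (g (e, false) + g (e, true))%E
  = \esum_(v in [set: vert G]) \esum_(x in [set x | eend x = v]) g x.
Proof.
move=> g_ge0.
rewrite (@esum_esum _ _ _ [set: vert G] (fun v => [set x | eend x = v])
  (fun _ x => g x)) //.
rewrite (reindex_esum [set: edge G * bool] _ (fun x => (eend x, x))) //; last first.
  split; [by [] | by move=> x y _ _ [] | by move=> [v x] [_ /= <-]; exists x].
rewrite /= (esumID [set x | x.2 = true]) // esumD // addeC.
congr (_ + _)%E; apply/esym.
- apply: (reindex_esum _ _ (fun e => (e, true))); split.
  + by move=> e _; split.
  + by move=> x y _ _ [].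
  + by move=> [e b] [_ /= ->]; exists e.
- apply: (reindex_esum _ _ (fun e => (e, false))); split.
  + by move=> e _; split.
  + by move=> x y _ _ [].
  + by move=> [e []] [_ /=] //; exists e.
Qed.

Context (p : R) (p_ge1 : 1 <= p) (f : edgewise_linear G).

Definition norm_E_pow : \bar R :=
  \esum_(e in [set: edge G])
    ((edens e)%:E *
     \int[lebesgue_measure]_(t in `[0%R, elen e]) ((`|fe f e t| `^ p)%:E))%E.

Definition norm_V_pow : \bar R :=
  \esum_(v in [set: vert G]) ((vmeas v * `|fv f v| `^ p)%:E).

Lemma norm_E_pow_ge0 : (0 <= norm_E_pow)%E.
Proof.
apply: esum_ge0 => e _; apply: mule_ge0; first by rewrite lee_fin ltW ?edens_gt0.
by apply: integral_ge0 => t _; rewrite lee_fin powR_ge0.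
Qed.

Lemma norm_V_pow_ge0 : (0 <= norm_V_pow)%E.
Proof.
by apply: esum_ge0 => v _; rewrite lee_fin mulr_ge0 ?powR_ge0 // ltW ?vmeas_gt0.
Qed.

Lemma edge_integral_le (e : edge G) :
  ((edens e)%:E *
   \int[lebesgue_measure]_(t in `[0%R, elen e]) ((`|fe f e t| `^ p)%:E)
   <= (emeas e / 2 * `|fv f (esrc e)| `^ p
       + emeas e / 2 * `|fv f (etgt e)| `^ p)%:E)%E.
Proof.
have [a [b f_affine]] := fe_linear f e.
have l_gt0 := elen_gt0 e.
have [l_in0 l_inl] : 0 \in `[0, elen e]%R /\ elen e \in `[0, elen e]%R.
  by split; rewrite in_itv /= lexx ?ltW.
rewrite -fe_src -fe_tgt !f_affine // mulr0 addr0.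
under eq_integral => t /[!inE] t_in do rewrite f_affine //.
have edens_ge0 : (0 <= (edens e)%:E)%E by rewrite lee_fin ltW ?edens_gt0.
apply: le_trans
  (lee_wpmul2l edens_ge0 (integral_powR_norm_affine_le p_ge1 _ a b l_gt0)) _.
by rewrite -EFinM lee_fin /emeas; lra.
Qed.

Lemma norm_E_pow_le (rho : \bar R) : (0 <= rho)%E ->
  (forall v : vert G, half_degree v <= rho)%E ->
  (norm_E_pow <= rho * norm_V_pow)%E.
Proof.
move=> rho_ge0 half_degree_le.
pose P v := `|fv f v| `^ p.
have P_ge0 v : 0 <= P v by exact: powR_ge0.
pose g x := (emeas x.1 / 2 * P (eend x))%:E.
have g_ge0 x : (0 <= g x)%E by rewrite lee_fin mulr_ge0 ?divr_ge0 // ltW ?emeas_gt0.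
apply: (@le_trans _ _ (\esum_(e in [set: edge G]) (g (e, false) + g (e, true)))%E).
  by apply: le_esum => e _; rewrite -EFinD; exact: edge_integral_le.
rewrite esum_edge_ends // /norm_V_pow.
apply: le_trans (esumZl_le _ _ _ rho_ge0 _); last first.
  by move=> v; rewrite lee_fin mulr_ge0 // ltW ?vmeas_gt0.
apply: le_esum => v _.
rewrite (eq_esum (b := fun x => (P v)%:E * (emeas x.1 / 2)%:E)%E); last first.
  by move=> x /= <-; rewrite /g -EFinM mulrC.
apply: le_trans (esumZl_le _ _ _ _ _) _.
- by rewrite lee_fin.
- by move=> x; rewrite lee_fin divr_ge0 // ltW ?emeas_gt0.
rewrite -vmeas_mul_half_degree muleA -EFinM mulrC [X in (_ <= X)%E]muleC.
apply: lee_wpmul2l; first by rewrite lee_fin mulr_ge0 // ltW ?vmeas_gt0.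
exact: half_degree_le.
Qed.

Lemma norm_E_pow_eq0 : (vert G -> False) -> norm_E_pow = 0%E.
Proof. by move=> no_vert; apply: esum1 => e _; case: (no_vert (esrc e)). Qed.

End graph.

Theorem mainTheorem2 (R : realType) (G : mgraph R) (f : edgewise_linear G)
  (p : R) (hp : 1 <= p) :
  (norm_E p f <= poweR (rho_sup G) p^-1 * norm_V p f)%E.
Proof.
have p_gt0 : 0 < p := lt_le_trans ltr01 hp.
rewrite /norm_E /norm_V -/(norm_E_pow p f) -/(norm_V_pow p f).
have [[v _]|no_vert] := pselect (exists v : vert G, True); last first.
  rewrite norm_E_pow_eq0 => [|v]; last by apply: no_vert; exists v.
  by rewrite poweR0r ?invr_eq0 ?gt_eqF // mule_ge0 // poweR_ge0.
have rho_ge0 : (0 <= rho_sup G)%E :=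
  le_trans (half_degree_ge0 v) (half_degree_le_rho_sup v).
rewrite -poweRM ?norm_V_pow_ge0 //.
apply: gt0_ler_poweR; first by rewrite invr_ge0 ltW.
- by rewrite in_itv /= leey norm_E_pow_ge0.
- by rewrite in_itv /= leey mule_ge0 ?norm_V_pow_ge0.
by apply: norm_E_pow_le => //; exact: half_degree_le_rho_sup.
Qed.
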